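(* Let $A,B$ be rings and $M$ a $(B,A)$-bimodule, and let $T=\begin{pmatrix} A & 0\\ M & B\end{pmatrix}$ be the formal triangular matrix ring. If $T$ is weakly $r$-clean, then $A$ and $B$ are weakly $r$-clean.
   Context: Rings are associative with identity. $T$ consists of matrices $\begin{pmatrix} a & 0\\ m & b\end{pmatrix}$ with $a\in A$, $b\in B$, $m\in M$, with matrix addition and multiplication. $Idem(R)$ denotes idempotents and $Reg(R)=\{r: r=ryr \text{ for some } y\in R\}$ regular elements. An element is weakly $r$-clean if it equals $r+e$ or $r-e$ with $r\in Reg(R)$, $e\in Idem(R)$; a ring is weakly $r$-clean if all its elements are. *)

From mathcomp Require Import all_boot all_algebra.
Set Implicit Arguments. Unset Strict Implicit. Unset Printing Implicit Defensive.
Import GRing.Theory.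
Local Open Scope ring_scope.

Definition is_idem_op (T : Type) (mul : T -> T -> T) (e : T) : Prop :=
  mul e e = e.
Definition is_reg_op (T : Type) (mul : T -> T -> T) (r : T) : Prop :=
  exists y, r = mul (mul r y) r.
Definition weakly_r_clean_elt_op (T : Type) (add : T -> T -> T) (opp : T -> T)
  (mul : T -> T -> T) (x : T) : Prop :=
  exists r e, is_reg_op mul r /\ is_idem_op mul e /\
              (x = add r e \/ x = add r (opp e)).
Definition weakly_r_clean_op (T : Type) (add : T -> T -> T) (opp : T -> T)
  (mul : T -> T -> T) : Prop :=
  forall x, weakly_r_clean_elt_op add opp mul x.

Definition weakly_r_clean (R : pzRingType) : Prop :=
  weakly_r_clean_op (@GRing.add R) (@GRing.opp R) (@GRing.mul R).

Record bimodule (A B : pzRingType) (M : zmodType)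
  (lact : B -> M -> M) (ract : M -> A -> M) : Prop := Bimodule {
  lactDr : forall b m m', lact b (m + m') = lact b m + lact b m';
  lactDl : forall b b' m, lact (b + b') m = lact b m + lact b' m;
  lactA  : forall b b' m, lact (b * b') m = lact b (lact b' m);
  lact1  : forall m, lact 1 m = m;
  ractDl : forall m m' a, ract (m + m') a = ract m a + ract m' a;
  ractDr : forall m a a', ract m (a + a') = ract m a + ract m a';
  ractA  : forall m a a', ract m (a * a') = ract (ract m a) a';
  ract1  : forall m, ract m 1 = m;
  lractA : forall b m a, ract (lact b m) a = lact b (ract m a)
}.

(* The formal triangular matrix ring T = [[A, 0], [M, B]]:
   the element (a, m, b) stands for the matrix [[a, 0], [m, b]]. *)
Definition tri (A B : pzRingType) (M : zmodType) : Type := (A * M * B)%type.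

Definition tri_add (A B : pzRingType) (M : zmodType) (x y : tri A B M)
  : tri A B M :=
  let: (a, m, b) := x in let: (a', m', b') := y in (a + a', m + m', b + b').

Definition tri_opp (A B : pzRingType) (M : zmodType) (x : tri A B M)
  : tri A B M :=
  let: (a, m, b) := x in (- a, - m, - b).

(* [[a,0],[m,b]] * [[a',0],[m',b']] = [[a a', 0], [m a' + b m', b b']] *)
Definition tri_mul (A B : pzRingType) (M : zmodType)
  (lact : B -> M -> M) (ract : M -> A -> M) (x y : tri A B M) : tri A B M :=
  let: (a, m, b) := x in let: (a', m', b') := y in
  (a * a', ract m a' + lact b m', b * b').

Definition tri_weakly_r_clean (A B : pzRingType) (M : zmodType)
  (lact : B -> M -> M) (ract : M -> A -> M) : Prop :=
  weakly_r_clean_op (@tri_add A B M) (@tri_opp A B M) (tri_mul lact ract).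

From mathcomp Require Import all_boot all_algebra.

Set Implicit Arguments. Unset Strict Implicit. Unset Printing Implicit Defensive.
Local Open Scope ring_scope.

(* The corner maps [[a,0],[m,b]] |-> a and |-> b are surjective and preserve
   addition, negation and multiplication, so they carry regular elements to
   regular elements and idempotents to idempotents: a decomposition
   [[a,0],[0,b]] = r +- e in T projects to decompositions of a and of b. *)

Section Morphism.

Variables (T S : Type).
Variables (addT : T -> T -> T) (oppT : T -> T) (mulT : T -> T -> T).
Variables (addS : S -> S -> S) (oppS : S -> S) (mulS : S -> S -> S).
Variable f : T -> S.
Hypothesis fD : forall x y, f (addT x y) = addS (f x) (f y).
Hypothesis fN : forall x, f (oppT x) = oppS (f x).
Hypothesis fM : forall x y, f (mulT x y) = mulS (f x) (f y).

Lemma is_reg_op_morph r : is_reg_op mulT r -> is_reg_op mulS (f r).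
Proof. by case=> y ry; exists (f y); rewrite {1}ry !fM. Qed.

Lemma is_idem_op_morph e : is_idem_op mulT e -> is_idem_op mulS (f e).
Proof. by rewrite /is_idem_op -fM => ->. Qed.

Lemma weakly_r_clean_elt_op_morph x :
  weakly_r_clean_elt_op addT oppT mulT x ->
  weakly_r_clean_elt_op addS oppS mulS (f x).
Proof.
case=> r [e [reg_r [idem_e x_def]]].
exists (f r), (f e); split; [exact: is_reg_op_morph | split].
- exact: is_idem_op_morph.
- by case: x_def => ->; [left | right]; rewrite fD ?fN.
Qed.

Lemma weakly_r_clean_op_surj (g : S -> T) : cancel g f ->
  weakly_r_clean_op addT oppT mulT -> weakly_r_clean_op addS oppS mulS.
Proof.
by move=> gK cleanT s; rewrite -[s]gK; apply: weakly_r_clean_elt_op_morph.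
Qed.

End Morphism.

Section Corners.

Variables (A B : pzRingType) (M : zmodType).
Variables (lact : B -> M -> M) (ract : M -> A -> M).

Definition tri_cornerA (x : tri A B M) : A := x.1.1.
Definition tri_cornerB (x : tri A B M) : B := x.2.

Lemma tri_cornerA_add x y :
  tri_cornerA (tri_add x y) = tri_cornerA x + tri_cornerA y.
Proof. by case: x => [[? ?] ?]; case: y => [[? ?] ?]. Qed.

Lemma tri_cornerA_opp x : tri_cornerA (tri_opp x) = - tri_cornerA x.
Proof. by case: x => [[? ?] ?]. Qed.

Lemma tri_cornerA_mul x y :
  tri_cornerA (tri_mul lact ract x y) = tri_cornerA x * tri_cornerA y.
Proof. by case: x => [[? ?] ?]; case: y => [[? ?] ?]. Qed.

Lemma tri_cornerB_add x y :
  tri_cornerB (tri_add x y) = tri_cornerB x + tri_cornerB y.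
Proof. by case: x => [[? ?] ?]; case: y => [[? ?] ?]. Qed.

Lemma tri_cornerB_opp x : tri_cornerB (tri_opp x) = - tri_cornerB x.
Proof. by case: x => [[? ?] ?]. Qed.

Lemma tri_cornerB_mul x y :
  tri_cornerB (tri_mul lact ract x y) = tri_cornerB x * tri_cornerB y.
Proof. by case: x => [[? ?] ?]; case: y => [[? ?] ?]. Qed.

End Corners.

Theorem proposition2p16 (A B : pzRingType) (M : zmodType)
  (lact : B -> M -> M) (ract : M -> A -> M) :
  bimodule lact ract ->
  tri_weakly_r_clean lact ract ->
  weakly_r_clean A /\ weakly_r_clean B.
Proof.
move=> _ cleanT; split.
- apply: (weakly_r_clean_op_surj (@tri_cornerA_add A B M) (@tri_cornerA_opp A B M)
    (tri_cornerA_mul lact ract) (g := fun a => (a, 0, 0))) cleanT => //.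
- apply: (weakly_r_clean_op_surj (@tri_cornerB_add A B M) (@tri_cornerB_opp A B M)
    (tri_cornerB_mul lact ract) (g := fun b => (0, 0, b))) cleanT => //.
Qed.
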